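(* Let $\varepsilon,\Delta t,\Delta x_1,\Delta x_2,\underline{\rho},\underline{a}>0$, $\underline{\mathbf{u}}=(\underline{u}_1,\underline{u}_2)\in\mathbb{R}^2$ and $b^{(2)}_1,b^{(2)}_2,b^{(2)}_3\in\mathbb{R}$. Let $(\rho,\mathbf{u})\in C^1([0,\infty);H^2(\mathbb{T}^2)^3)$ solve $$\partial_t\begin{pmatrix}\rho\\ \mathbf{u}\end{pmatrix}+(\underline{\mathbf{u}}\cdot\nabla)\begin{pmatrix}\rho\\ \mathbf{u}\end{pmatrix}+\begin{pmatrix}\underline{\rho}\nabla\cdot\mathbf{u}\\ \frac{\underline{a}^2}{\underline{\rho}\varepsilon^2}\nabla\rho\end{pmatrix}=\mathcal{B}^{(2)}\begin{pmatrix}\rho\\ \mathbf{u}\end{pmatrix}$$ on $\mathbb{T}^2$, with $\mathcal{B}^{(2)}$ as in the context. If $(\rho(0,\cdot),\mathbf{u}(0,\cdot))\in\mathcal{E}$, then $(\rho(t,\cdot),\mathbf{u}(t,\cdot))\in\mathcal{E}$ for all $t>0$.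
   Context: $\mathcal{E}=\{(\rho,\mathbf{u})\in L^2(\mathbb{T}^2)^{3}:\nabla\rho=0,\ \nabla\cdot\mathbf{u}=0\}$. With $D=\underline{\mathbf{u}}\cdot\nabla$: $\mathcal{B}^{(2)}_{1,1}=\Delta t\big(b^{(2)}_1D^2+b^{(2)}_3\frac{\underline{a}^2}{\varepsilon^2}\Delta\big)+\frac12\sum_{k=1}^2\Delta x_k|\underline{u}_k|\partial_{x_k}^2$, $\mathcal{B}^{(2)}_{1,2}=\Delta t\,\underline{\rho}\,b^{(2)}_2D\nabla\cdot$, $\mathcal{B}^{(2)}_{2,1}=\Delta t\frac{\underline{a}^2}{\underline{\rho}\varepsilon^2}b^{(2)}_2D\nabla$, $\mathcal{B}^{(2)}_{2,2}=\Delta t\big(b^{(2)}_1D^2+b^{(2)}_3\frac{\underline{a}^2}{\varepsilon^2}\nabla\nabla\cdot\big)+\frac12\sum_{k=1}^2\Delta x_k|\underline{u}_k|\partial_{x_k}^2\mathbb{I}_2$ (first row scalar, second row vector valued). This is the modified equation of a first order fully-discrete IMEX-RK finite volume scheme applied to the linear wave system; in the paper the $b^{(2)}_i$ are specific polynomials in the Butcher coefficients. *)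

From Stdlib Require Import Reals ZArith.
Open Scope R_scope.

Record Cx := mkC { re : R; im : R }.
Definition C0 : Cx := mkC 0 0.
Definition Cadd (x y : Cx) : Cx := mkC (re x + re y) (im x + im y).
Definition Cmul (x y : Cx) : Cx :=
  mkC (re x * re y - im x * im y) (re x * im y + im x * re y).
Definition Cscale (r : R) (x : Cx) : Cx := mkC (r * re x) (r * im x).
Definition Cconj (x : Cx) : Cx := mkC (re x) (- im x).
Definition Cnorm2 (x : Cx) : R := re x * re x + im x * im x.

(* ---------- Fourier coefficients on T^2 = (R/2piZ)^2 ----------
   A (complex) L^2 function f on T^2 is represented by its Fourier
   coefficients  f_hat : Z -> Z -> Cx  (f = sum_k f_hat k e^{i k.x}). *)
Definition Fcoef := Z -> Z -> Cx.
Definition Fzero : Fcoef := fun _ _ => C0.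
Definition Fadd (f g : Fcoef) : Fcoef := fun a b => Cadd (f a b) (g a b).
Definition Fscale (r : R) (f : Fcoef) : Fcoef := fun a b => Cscale r (f a b).
Definition Fsub (f g : Fcoef) : Fcoef := Fadd f (Fscale (-1) g).

Definition pd1 (f : Fcoef) : Fcoef := fun a b => Cmul (mkC 0 (IZR a)) (f a b).
Definition pd2 (f : Fcoef) : Fcoef := fun a b => Cmul (mkC 0 (IZR b)) (f a b).
Definition lap (f : Fcoef) : Fcoef := Fadd (pd1 (pd1 f)) (pd2 (pd2 f)).
Definition divg (u1 u2 : Fcoef) : Fcoef := Fadd (pd1 u1) (pd2 u2).

Definition realF (f : Fcoef) : Prop :=
  forall a b, f (- a)%Z (- b)%Z = Cconj (f a b).

Definition boxsum (N : nat) (g : Z -> Z -> R) : R :=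
  sum_f_R0 (fun i => sum_f_R0 (fun j =>
     g (Z.of_nat i - Z.of_nat N)%Z (Z.of_nat j - Z.of_nat N)%Z) (2 * N)) (2 * N).

Definition w0 (a b : Z) : R := 1.
Definition w2 (a b : Z) : R := (1 + IZR a ^ 2 + IZR b ^ 2) ^ 2.

Definition normsq_le (w : Z -> Z -> R) (f : Fcoef) (M : R) : Prop :=
  forall N, boxsum N (fun a b => w a b * Cnorm2 (f a b)) <= M.
Definition inL2 (f : Fcoef) : Prop := exists M, normsq_le w0 f M.
Definition inH2 (f : Fcoef) : Prop := exists M, normsq_le w2 f M.

Record State := mkS { sr : Fcoef; su1 : Fcoef; su2 : Fcoef }.
Definition Sadd (U V : State) : State :=
  mkS (Fadd (sr U) (sr V)) (Fadd (su1 U) (su1 V)) (Fadd (su2 U) (su2 V)).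
Definition Sscale (r : R) (U : State) : State :=
  mkS (Fscale r (sr U)) (Fscale r (su1 U)) (Fscale r (su2 U)).
Definition Ssub (U V : State) : State := Sadd U (Sscale (-1) V).

Definition realS (U : State) : Prop := realF (sr U) /\ realF (su1 U) /\ realF (su2 U).
Definition inL2S (U : State) : Prop := inL2 (sr U) /\ inL2 (su1 U) /\ inL2 (su2 U).
Definition inH2S (U : State) : Prop := inH2 (sr U) /\ inH2 (su1 U) /\ inH2 (su2 U).

Definition H2S_le (U : State) (M : R) : Prop :=
  forall N, boxsum N (fun a b => w2 a b *
     (Cnorm2 (sr U a b) + Cnorm2 (su1 U a b) + Cnorm2 (su2 U a b))) <= M.

Definition inE (U : State) : Prop :=
  inL2S U /\ pd1 (sr U) = Fzero /\ pd2 (sr U) = Fzero /\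
  divg (su1 U) (su2 U) = Fzero.

Definition C1_H2 (U dU : R -> State) : Prop :=
  (forall t, 0 <= t -> inH2S (U t) /\ inH2S (dU t) /\ realS (U t) /\ realS (dU t)) /\
  (forall t, 0 <= t -> forall e, 0 < e -> exists d, 0 < d /\
     forall h, h <> 0 -> Rabs h < d -> 0 <= t + h ->
       H2S_le (Ssub (Sscale (/ h) (Ssub (U (t + h)) (U t))) (dU t)) e) /\
  (forall t, 0 <= t -> forall e, 0 < e -> exists d, 0 < d /\
     forall s, 0 <= s -> Rabs (s - t) < d -> H2S_le (Ssub (dU s) (dU t)) e).

Record params := mkP {
  p_eps : R; p_dt : R; p_dx1 : R; p_dx2 : R; p_rhob : R; p_ab : R;
  p_ub1 : R; p_ub2 : R; p_b1 : R; p_b2 : R; p_b3 : R }.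

Section Ops.
Variable P : params.
Let eps := p_eps P. Let dt := p_dt P. Let dx1 := p_dx1 P. Let dx2 := p_dx2 P.
Let rhob := p_rhob P. Let ab := p_ab P. Let ub1 := p_ub1 P. Let ub2 := p_ub2 P.
Let b1 := p_b1 P. Let b2 := p_b2 P. Let b3 := p_b3 P.

Definition Dadv (f : Fcoef) : Fcoef := Fadd (Fscale ub1 (pd1 f)) (Fscale ub2 (pd2 f)).
Definition visc (f : Fcoef) : Fcoef :=
  Fscale (1/2) (Fadd (Fscale (dx1 * Rabs ub1) (pd1 (pd1 f)))
                     (Fscale (dx2 * Rabs ub2) (pd2 (pd2 f)))).

Definition B11 (f : Fcoef) : Fcoef :=
  Fadd (Fscale dt (Fadd (Fscale b1 (Dadv (Dadv f)))
                        (Fscale (b3 * ab ^ 2 / eps ^ 2) (lap f)))) (visc f).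
Definition B12 (u1 u2 : Fcoef) : Fcoef :=
  Fscale (dt * rhob * b2) (Dadv (divg u1 u2)).
Definition B21 (pd : Fcoef -> Fcoef) (f : Fcoef) : Fcoef :=
  Fscale (dt * (ab ^ 2 / (rhob * eps ^ 2)) * b2) (Dadv (pd f)).
Definition B22 (pd : Fcoef -> Fcoef) (uj u1 u2 : Fcoef) : Fcoef :=
  Fadd (Fscale dt (Fadd (Fscale b1 (Dadv (Dadv uj)))
                        (Fscale (b3 * ab ^ 2 / eps ^ 2) (pd (divg u1 u2))))) (visc uj).

Definition Bop (U : State) : State :=
  mkS (Fadd (B11 (sr U)) (B12 (su1 U) (su2 U)))
      (Fadd (B21 pd1 (sr U)) (B22 pd1 (su1 U) (su1 U) (su2 U)))
      (Fadd (B21 pd2 (sr U)) (B22 pd2 (su2 U) (su1 U) (su2 U))).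

Definition Lop (U : State) : State :=
  mkS (Fadd (Dadv (sr U)) (Fscale rhob (divg (su1 U) (su2 U))))
      (Fadd (Dadv (su1 U)) (Fscale (ab ^ 2 / (rhob * eps ^ 2)) (pd1 (sr U))))
      (Fadd (Dadv (su2 U)) (Fscale (ab ^ 2 / (rhob * eps ^ 2)) (pd2 (sr U)))).
End Ops.

From Stdlib Require Import Reals ZArith Lra Lia Psatz FunctionalExtensionality.
Open Scope R_scope.

(* Every operator in the equation is a Fourier multiplier, so the modes decouple.
   In the mode [k], the coefficients of [grad rho] and [div u] (the part of the state
   transverse to E) satisfy a closed linear ODE: advection and the diagonal parts of
   [B^(2)] act as scalars, while the acoustic terms and the off-diagonal parts of
   [B^(2)] map [div u] to [grad rho] and back. Their energy [E_k] therefore obeys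
   [E_k' <= C_k E_k]; as [E_k(0) = 0], Gronwall's lemma gives [E_k = 0] for all
   times. *)

Definition Cdot (x y : Cx) : R := re x * re y + im x * im y.

Lemma Cnorm2_ge0 (x : Cx) : 0 <= Cnorm2 x.
Proof. unfold Cnorm2; nra. Qed.

Lemma Cnorm2_eq0 (x : Cx) : Cnorm2 x = 0 -> x = C0.
Proof.
  destruct x as [x1 x2]; unfold Cnorm2, C0; simpl; intros H.
  f_equal; nra.
Qed.

Lemma Cnorm2_Cscale (r : R) (x : Cx) : Cnorm2 (Cscale r x) = r ^ 2 * Cnorm2 x.
Proof. unfold Cnorm2, Cscale; simpl; ring. Qed.

Lemma Cnorm2_Cadd_le (x y : Cx) : Cnorm2 (Cadd x y) <= 2 * (Cnorm2 x + Cnorm2 y).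
Proof.
  destruct x as [x1 x2], y as [y1 y2]; unfold Cnorm2, Cadd; simpl.
  pose proof (pow2_ge_0 (x1 - y1)); pose proof (pow2_ge_0 (x2 - y2)); nra.
Qed.

Lemma Cdot_Cadd_r (x y z : Cx) : Cdot x (Cadd y z) = Cdot x y + Cdot x z.
Proof. unfold Cdot, Cadd; simpl; ring. Qed.

Lemma Cdot_Cmul_diag (mu x : Cx) : Cdot x (Cmul mu x) = re mu * Cnorm2 x.
Proof. unfold Cdot, Cmul, Cnorm2; simpl; ring. Qed.

(* [Cdot x (c y) = Cdot (conj c x) y], then Young's inequality. *)
Lemma Cdot_Cmul_le (c x y : Cx) : 2 * Cdot x (Cmul c y) <= Cnorm2 c * Cnorm2 x + Cnorm2 y.
Proof.
  destruct c as [c1 c2], x as [x1 x2], y as [y1 y2]; unfold Cdot, Cmul, Cnorm2; simpl.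
  pose proof (pow2_ge_0 (c1 * x1 + c2 * x2 - y1)).
  pose proof (pow2_ge_0 (c1 * x2 - c2 * x1 - y2)).
  nra.
Qed.

Lemma coupled_energy_le (mu al be : Cx) (A B : R) (g1 g2 d : Cx) :
  2 * (Cdot g1 (Cadd (Cmul mu g1) (Cmul (Cscale A al) d))
     + Cdot g2 (Cadd (Cmul mu g2) (Cmul (Cscale B al) d))
     + Cdot d (Cadd (Cmul mu d) (Cmul be (Cadd (Cscale A g1) (Cscale B g2)))))
  <= (2 * Rabs (re mu) + (A ^ 2 + B ^ 2) * (Cnorm2 al + 2) + Cnorm2 be + 2)
     * (Cnorm2 g1 + Cnorm2 g2 + Cnorm2 d).
Proof.
  rewrite !Cdot_Cadd_r, !Cdot_Cmul_diag.
  pose proof (Cdot_Cmul_le (Cscale A al) g1 d) as Y1.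
  pose proof (Cdot_Cmul_le (Cscale B al) g2 d) as Y2.
  pose proof (Cdot_Cmul_le be d (Cadd (Cscale A g1) (Cscale B g2))) as Y3.
  pose proof (Cnorm2_Cadd_le (Cscale A g1) (Cscale B g2)) as Hsum.
  rewrite Cnorm2_Cscale in Y1, Y2; rewrite !Cnorm2_Cscale in Hsum.
  set (S := Cnorm2 g1 + Cnorm2 g2 + Cnorm2 d).
  pose proof (Cnorm2_ge0 g1); pose proof (Cnorm2_ge0 g2); pose proof (Cnorm2_ge0 d).
  pose proof (Cnorm2_ge0 al); pose proof (Cnorm2_ge0 be).
  pose proof (pow2_ge_0 A); pose proof (pow2_ge_0 B).
  assert (forall k x, 0 <= k -> x <= S -> k * x <= k * S)
    as scale_le by (intros; apply Rmult_le_compat_l; lra).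
  pose proof (scale_le (A ^ 2 * Cnorm2 al) (Cnorm2 g1) ltac:(nra) ltac:(unfold S; lra)).
  pose proof (scale_le (B ^ 2 * Cnorm2 al) (Cnorm2 g2) ltac:(nra) ltac:(unfold S; lra)).
  pose proof (scale_le (A ^ 2) (Cnorm2 g1) ltac:(lra) ltac:(unfold S; lra)).
  pose proof (scale_le (B ^ 2) (Cnorm2 g2) ltac:(lra) ltac:(unfold S; lra)).
  pose proof (scale_le (Cnorm2 be) (Cnorm2 d) ltac:(lra) ltac:(unfold S; lra)).
  assert (0 <= (Rabs (re mu) - re mu) * S).
  { apply Rmult_le_pos; [pose proof (Rle_abs (re mu)) | unfold S]; lra. }
  unfold S in *; lra.
Qed.

Lemma gronwall_zero (E dE : R -> R) (C T : R) :
  0 < T ->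
  (forall s, 0 <= s <= T -> derivable_pt_lim E s (dE s)) ->
  (forall s, 0 < s < T -> dE s <= C * E s) ->
  E 0 = 0 -> (forall s, 0 <= s <= T -> 0 <= E s) -> E T = 0.
Proof.
  intros HT Hderiv Hrate H0 Hpos.
  set (F := fun s => E s * exp (- C * s)).
  set (F' := fun s => (dE s - C * E s) * exp (- C * s)).
  assert (Hexp : forall s, derivable_pt_lim (fun s => exp (- C * s)) s (exp (- C * s) * - C)).
  { intros s.
    pose proof (derivable_pt_lim_scal id (- C) s 1 (derivable_pt_lim_id s)) as Hlin.
    rewrite Rmult_1_r in Hlin.
    exact (derivable_pt_lim_comp _ exp s _ _ Hlin (derivable_pt_lim_exp _)). }
  assert (HF : forall s, 0 <= s <= T -> derivable_pt_lim F s (F' s)).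
  { intros s Hs.
    replace (F' s) with (dE s * exp (- C * s) + E s * (exp (- C * s) * - C))
      by (unfold F'; ring).
    exact (derivable_pt_lim_mult _ _ s _ _ (Hderiv s Hs) (Hexp s)). }
  destruct (MVT_cor2 F F' 0 T HT HF) as [c [Hmvt Hc]].
  assert (F' c <= 0).
  { unfold F'. pose proof (exp_pos (- C * c)). pose proof (Hrate c Hc). nra. }
  unfold F in Hmvt. rewrite H0 in Hmvt.
  pose proof (exp_pos (- C * T)). pose proof (Hpos T ltac:(lra)). nra.
Qed.

Lemma sum_f_R0_ge_term (f : nat -> R) (n i : nat) :
  (forall k, 0 <= f k) -> (i <= n)%nat -> f i <= sum_f_R0 f n.
Proof.
  intros Hf. induction n as [|n IH]; intros Hi; simpl.
  - replace i with 0%nat by lia. lra.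
  - destruct (Nat.eq_dec i (S n)) as [-> | Hne].
    + pose proof (cond_pos_sum f n Hf). lra.
    + pose proof (IH ltac:(lia)). pose proof (Hf (S n)). lra.
Qed.

Lemma boxsum_ge_term (N : nat) (g : Z -> Z -> R) (a b : Z) :
  (forall x y, 0 <= g x y) ->
  (Z.abs a <= Z.of_nat N)%Z -> (Z.abs b <= Z.of_nat N)%Z -> g a b <= boxsum N g.
Proof.
  intros Hg Ha Hb. unfold boxsum.
  set (i := Z.to_nat (a + Z.of_nat N)). set (j := Z.to_nat (b + Z.of_nat N)).
  replace a with (Z.of_nat i - Z.of_nat N)%Z at 1 by (unfold i; lia).
  replace b with (Z.of_nat j - Z.of_nat N)%Z at 1 by (unfold j; lia).
  eapply Rle_trans.
  - apply (sum_f_R0_ge_term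
             (fun j => g (Z.of_nat i - Z.of_nat N)%Z (Z.of_nat j - Z.of_nat N)%Z) (2 * N));
      [intros; apply Hg | unfold j; lia].
  - apply (sum_f_R0_ge_term
             (fun i => sum_f_R0 (fun j =>
                g (Z.of_nat i - Z.of_nat N)%Z (Z.of_nat j - Z.of_nat N)%Z) (2 * N)) (2 * N));
      [intros; apply cond_pos_sum; intros; apply Hg | unfold i; lia].
Qed.

Lemma w2_ge1 (a b : Z) : 1 <= w2 a b.
Proof.
  unfold w2. pose proof (pow2_ge_0 (IZR a)). pose proof (pow2_ge_0 (IZR b)). nra.
Qed.

Definition mode_norm2 (V : State) (a b : Z) : R :=
  Cnorm2 (sr V a b) + Cnorm2 (su1 V a b) + Cnorm2 (su2 V a b).

Lemma H2S_le_mode_norm2 (V : State) (e : R) (a b : Z) :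
  H2S_le V e -> mode_norm2 V a b <= e.
Proof.
  intros H. eapply Rle_trans; [| apply (H (Z.to_nat (Z.abs a + Z.abs b)))].
  assert (Hpos : forall x y, 0 <= mode_norm2 V x y).
  { intros x y. unfold mode_norm2.
    pose proof (Cnorm2_ge0 (sr V x y)). pose proof (Cnorm2_ge0 (su1 V x y)).
    pose proof (Cnorm2_ge0 (su2 V x y)). lra. }
  eapply Rle_trans;
    [| apply (boxsum_ge_term _ (fun x y => w2 x y * mode_norm2 V x y) a b); [| lia | lia]].
  - pose proof (w2_ge1 a b). pose proof (Hpos a b). nra.
  - intros x y. pose proof (w2_ge1 x y). pose proof (Hpos x y). nra.
Qed.

Lemma inH2_inL2 (f : Fcoef) : inH2 f -> inL2 f.
Proof.
  intros [M HM]. exists M. intros N. eapply Rle_trans; [| apply (HM N)].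
  unfold boxsum. apply sum_Rle. intros i _. apply sum_Rle. intros j _.
  unfold w0. set (a := (Z.of_nat i - Z.of_nat N)%Z). set (b := (Z.of_nat j - Z.of_nat N)%Z).
  pose proof (w2_ge1 a b). pose proof (Cnorm2_ge0 (f a b)). nra.
Qed.

Lemma inH2S_inL2S (V : State) : inH2S V -> inL2S V.
Proof. intros (H1 & H2 & H3). repeat split; apply inH2_inL2; assumption. Qed.

(* [C1_H2] only controls difference quotients with [t + h >= 0]; extending the
   trajectory linearly to negative times gives genuine two-sided derivatives at
   every [t >= 0], as required by the mean value theorem. *)
Definition extend (U dU : R -> State) (t : R) : State :=
  if Rle_dec 0 t then U t else Sadd (U 0) (Sscale t (dU 0)).

Lemma extend_nonneg (U dU : R -> State) (t : R) : 0 <= t -> extend U dU t = U t.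
Proof. intros Ht. unfold extend. destruct (Rle_dec 0 t); [reflexivity | lra]. Qed.

Section LinearCoefficient.

Variable sel : State -> R.
Hypothesis sel_add : forall V W, sel (Sadd V W) = sel V + sel W.
Hypothesis sel_scale : forall r V, sel (Sscale r V) = r * sel V.
Variable c : R.
Hypothesis sel_bounded : forall V e, H2S_le V e -> sel V ^ 2 <= c * e.

Lemma sel_right_deriv (U dU : R -> State) (t : R) :
  C1_H2 U dU -> 0 <= t -> forall eps, 0 < eps ->
  exists d, 0 < d /\ forall h, h <> 0 -> Rabs h < d -> 0 <= t + h ->
    Rabs ((sel (U (t + h)) - sel (U t)) / h - sel (dU t)) < eps.
Proof.
  intros [_ [Hdiff _]] Ht eps Heps.
  set (e := eps ^ 2 / (Rabs c + 1)).
  assert (He : 0 < e) by (unfold e; pose proof (Rabs_pos c); apply Rdiv_lt_0_compat; nra).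
  assert (Hce : c * e < eps ^ 2).
  { assert (e * (Rabs c + 1) = eps ^ 2)
      by (unfold e; field; pose proof (Rabs_pos c); lra).
    assert (c * e <= Rabs c * e) by (apply Rmult_le_compat_r; [lra | apply Rle_abs]).
    lra. }
  destruct (Hdiff t Ht e He) as [d [Hd Hquot]].
  exists d. split; [exact Hd |]. intros h Hh0 Hhd Hth.
  pose proof (sel_bounded _ _ (Hquot h Hh0 Hhd Hth)) as Hb.
  unfold Ssub in Hb. repeat rewrite ?sel_add, ?sel_scale in Hb.
  replace ((sel (U (t + h)) - sel (U t)) / h - sel (dU t))
    with (/ h * (sel (U (t + h)) + -1 * sel (U t)) + -1 * sel (dU t)) by (field; exact Hh0).
  set (X := / h * (sel (U (t + h)) + -1 * sel (U t)) + -1 * sel (dU t)) in *.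
  assert (X ^ 2 < eps ^ 2) by lra.
  apply Rabs_def1; nra.
Qed.

Lemma extend_linear_deriv (U dU : R -> State) (t : R) :
  C1_H2 U dU -> 0 <= t ->
  derivable_pt_lim (fun s => sel (extend U dU s)) t (sel (dU t)).
Proof.
  intros HC1 Ht eps Heps.
  destruct (sel_right_deriv U dU t HC1 Ht eps Heps) as [d [Hd Hclose]].
  destruct (Rle_lt_or_eq_dec 0 t Ht) as [Htpos | <-].
  - exists (mkposreal _ (Rmin_pos d t Hd Htpos)). intros h Hh0 Hh. simpl in Hh.
    pose proof (Rmin_l d t). pose proof (Rmin_r d t). pose proof (Rabs_def2 h t ltac:(lra)).
    rewrite !extend_nonneg by lra. apply Hclose; lra.
  - exists (mkposreal _ Hd). intros h Hh0 Hh. simpl in Hh.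
    destruct (Rle_dec 0 h) as [Hpos | Hneg].
    + rewrite !extend_nonneg by lra. apply Hclose; lra.
    + unfold extend. rewrite Rplus_0_l.
      destruct (Rle_dec 0 h); [contradiction |].
      destruct (Rle_dec 0 0); [| lra].
      rewrite sel_add, sel_scale.
      replace ((sel (U 0) + h * sel (dU 0) - sel (U 0)) / h - sel (dU 0)) with 0
        by (field; exact Hh0).
      rewrite Rabs_R0. exact Heps.
Qed.

End LinearCoefficient.

Record H2_functional (lin : State -> Cx) : Prop := {
  H2_functional_add : forall V W, lin (Sadd V W) = Cadd (lin V) (lin W);
  H2_functional_scale : forall r V, lin (Sscale r V) = Cscale r (lin V);
  H2_functional_bounded : exists c, forall V e, H2S_le V e -> Cnorm2 (lin V) <= c * e
}.

Lemma extend_Cnorm2_deriv (lin : State -> Cx) (U dU : R -> State) (t : R) :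
  H2_functional lin -> C1_H2 U dU -> 0 <= t ->
  derivable_pt_lim (fun s => Cnorm2 (lin (extend U dU s))) t
    (2 * Cdot (lin (U t)) (lin (dU t))).
Proof.
  intros [Hadd Hscale [c Hc]] HC1 Ht.
  assert (Hre : derivable_pt_lim (fun s => re (lin (extend U dU s))) t (re (lin (dU t)))).
  { apply (extend_linear_deriv (fun V => re (lin V))) with (c := c); auto.
    - intros V W. rewrite Hadd. reflexivity.
    - intros r V. rewrite Hscale. reflexivity.
    - intros V e HV. pose proof (Hc V e HV). pose proof (pow2_ge_0 (im (lin V))).
      unfold Cnorm2 in *. lra. }
  assert (Him : derivable_pt_lim (fun s => im (lin (extend U dU s))) t (im (lin (dU t)))).
  { apply (extend_linear_deriv (fun V => im (lin V))) with (c := c); auto.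
    - intros V W. rewrite Hadd. reflexivity.
    - intros r V. rewrite Hscale. reflexivity.
    - intros V e HV. pose proof (Hc V e HV). pose proof (pow2_ge_0 (re (lin V))).
      unfold Cnorm2 in *. lra. }
  replace (2 * Cdot (lin (U t)) (lin (dU t))) with
    (re (lin (dU t)) * re (lin (extend U dU t)) + re (lin (extend U dU t)) * re (lin (dU t))
     + (im (lin (dU t)) * im (lin (extend U dU t)) + im (lin (extend U dU t)) * im (lin (dU t))))
    by (rewrite extend_nonneg by exact Ht; unfold Cdot; ring).
  exact (derivable_pt_lim_plus _ _ t _ _
           (derivable_pt_lim_mult _ _ t _ _ Hre Hre) (derivable_pt_lim_mult _ _ t _ _ Him Him)).
Qed.

Definition mode_defect (a b : Z) (V : State) : R :=
  Cnorm2 (pd1 (sr V) a b) + Cnorm2 (pd2 (sr V) a b) + Cnorm2 (divg (su1 V) (su2 V) a b).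

Definition mode_pairing (a b : Z) (V W : State) : R :=
  Cdot (pd1 (sr V) a b) (pd1 (sr W) a b) + Cdot (pd2 (sr V) a b) (pd2 (sr W) a b)
  + Cdot (divg (su1 V) (su2 V) a b) (divg (su1 W) (su2 W) a b).

Lemma mode_defect_ge0 (a b : Z) (V : State) : 0 <= mode_defect a b V.
Proof.
  unfold mode_defect.
  pose proof (Cnorm2_ge0 (pd1 (sr V) a b)). pose proof (Cnorm2_ge0 (pd2 (sr V) a b)).
  pose proof (Cnorm2_ge0 (divg (su1 V) (su2 V) a b)). lra.
Qed.

Lemma mode_defect_inE (a b : Z) (V : State) : inE V -> mode_defect a b V = 0.
Proof.
  intros (_ & Hgrad1 & Hgrad2 & Hdiv). unfold mode_defect.
  rewrite Hgrad1, Hgrad2, Hdiv. unfold Fzero, C0, Cnorm2. simpl. ring.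
Qed.

Lemma inE_mode_defect (V : State) :
  inL2S V -> (forall a b, mode_defect a b V = 0) -> inE V.
Proof.
  intros HL2 Hdef.
  assert (Hzero : forall a b, pd1 (sr V) a b = C0 /\ pd2 (sr V) a b = C0
                              /\ divg (su1 V) (su2 V) a b = C0).
  { intros a b. specialize (Hdef a b). unfold mode_defect in Hdef.
    pose proof (Cnorm2_ge0 (pd1 (sr V) a b)). pose proof (Cnorm2_ge0 (pd2 (sr V) a b)).
    pose proof (Cnorm2_ge0 (divg (su1 V) (su2 V) a b)).
    repeat split; apply Cnorm2_eq0; lra. }
  repeat split; try apply HL2;
    do 2 (apply functional_extensionality; intros ?); apply Hzero.
Qed.

Lemma H2_functional_intro (lin : State -> Cx) (a b : Z) (k : R) :
  (forall V W, lin (Sadd V W) = Cadd (lin V) (lin W)) ->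
  (forall r V, lin (Sscale r V) = Cscale r (lin V)) ->
  0 <= k -> (forall V, Cnorm2 (lin V) <= k * mode_norm2 V a b) ->
  H2_functional lin.
Proof.
  intros Hadd Hscale Hk Hbound. split; [exact Hadd | exact Hscale |].
  exists k. intros V e HV.
  pose proof (H2S_le_mode_norm2 V e a b HV).
  pose proof (Hbound V). pose proof (Rmult_le_compat_l k _ _ Hk H). lra.
Qed.

Lemma H2_functional_pd1 (a b : Z) : H2_functional (fun V => pd1 (sr V) a b).
Proof.
  apply (H2_functional_intro _ a b (IZR a ^ 2)).
  - intros V W. unfold pd1, Sadd, Fadd, Cmul, Cadd. simpl. f_equal; ring.
  - intros r V. unfold pd1, Sscale, Fscale, Cmul, Cscale. simpl. f_equal; ring.
  - apply pow2_ge_0.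
  - intros V. unfold mode_norm2, Cnorm2, pd1, Cmul. simpl.
    pose proof (Cnorm2_ge0 (su1 V a b)). pose proof (Cnorm2_ge0 (su2 V a b)).
    unfold Cnorm2 in *. nra.
Qed.

Lemma H2_functional_pd2 (a b : Z) : H2_functional (fun V => pd2 (sr V) a b).
Proof.
  apply (H2_functional_intro _ a b (IZR b ^ 2)).
  - intros V W. unfold pd2, Sadd, Fadd, Cmul, Cadd. simpl. f_equal; ring.
  - intros r V. unfold pd2, Sscale, Fscale, Cmul, Cscale. simpl. f_equal; ring.
  - apply pow2_ge_0.
  - intros V. unfold mode_norm2, Cnorm2, pd2, Cmul. simpl.
    pose proof (Cnorm2_ge0 (su1 V a b)). pose proof (Cnorm2_ge0 (su2 V a b)).
    unfold Cnorm2 in *. nra.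
Qed.

Lemma H2_functional_divg (a b : Z) : H2_functional (fun V => divg (su1 V) (su2 V) a b).
Proof.
  apply (H2_functional_intro _ a b (IZR a ^ 2 + IZR b ^ 2)).
  - intros V W. unfold divg, pd1, pd2, Sadd, Fadd, Cmul, Cadd. simpl. f_equal; ring.
  - intros r V. unfold divg, pd1, pd2, Sscale, Fadd, Fscale, Cadd, Cmul, Cscale. simpl.
    f_equal; ring.
  - pose proof (pow2_ge_0 (IZR a)). pose proof (pow2_ge_0 (IZR b)). lra.
  - intros V. unfold mode_norm2, divg, pd1, pd2, Fadd, Cadd, Cmul.
    destruct (sr V a b) as [r1 r2], (su1 V a b) as [x1 x2], (su2 V a b) as [y1 y2].
    unfold Cnorm2. simpl.
    pose proof (pow2_ge_0 (IZR a * y1 - IZR b * x1)).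
    pose proof (pow2_ge_0 (IZR a * y2 - IZR b * x2)).
    pose proof (pow2_ge_0 (IZR a)). pose proof (pow2_ge_0 (IZR b)).
    assert (0 <= (IZR a ^ 2 + IZR b ^ 2) * (r1 * r1 + r2 * r2))
      by (apply Rmult_le_pos; nra).
    nra.
Qed.

Lemma extend_mode_defect_deriv (a b : Z) (U dU : R -> State) (t : R) :
  C1_H2 U dU -> 0 <= t ->
  derivable_pt_lim (fun s => mode_defect a b (extend U dU s)) t
    (2 * mode_pairing a b (U t) (dU t)).
Proof.
  intros HC1 Ht. unfold mode_pairing. rewrite !Rmult_plus_distr_l.
  pose proof (extend_Cnorm2_deriv _ U dU t (H2_functional_pd1 a b) HC1 Ht) as H1.
  pose proof (extend_Cnorm2_deriv _ U dU t (H2_functional_pd2 a b) HC1 Ht) as H2.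
  pose proof (extend_Cnorm2_deriv _ U dU t (H2_functional_divg a b) HC1 Ht) as H3.
  exact (derivable_pt_lim_plus _ _ t _ _ (derivable_pt_lim_plus _ _ t _ _ H1 H2) H3).
Qed.

(* In the Fourier mode [k = (a, b)] the advection [D] acts as multiplication by
   [i w] with [w = ub . k]; the coefficients of [grad rho] and [div u] then obey a
   closed linear system with diagonal symbol [mode_diag] and off-diagonal couplings
   [rhob c] and [K c], where [c = -(dt b2 w + i)] and [K = ab^2 / (rhob eps^2)]. *)
Definition mode_frequency (P : params) (a b : Z) : R :=
  p_ub1 P * IZR a + p_ub2 P * IZR b.

Definition mode_viscosity (P : params) (a b : Z) : R :=
  1 / 2 * (p_dx1 P * Rabs (p_ub1 P) * IZR a ^ 2 + p_dx2 P * Rabs (p_ub2 P) * IZR b ^ 2).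

Definition mode_diag (P : params) (a b : Z) : Cx :=
  mkC (- p_dt P * p_b1 P * mode_frequency P a b ^ 2
       - p_dt P * (p_b3 P * p_ab P ^ 2 / p_eps P ^ 2) * (IZR a ^ 2 + IZR b ^ 2)
       - mode_viscosity P a b)
      (- mode_frequency P a b).

Definition mode_coupling (P : params) (a b : Z) : Cx :=
  mkC (- (p_dt P * p_b2 P * mode_frequency P a b)) (-1).

Lemma Dadv_symbol (P : params) (f : Fcoef) (a b : Z) :
  Dadv P f a b = Cmul (mkC 0 (mode_frequency P a b)) (f a b).
Proof.
  unfold Dadv, Fadd, Fscale, pd1, pd2, mode_frequency, Cadd, Cscale, Cmul; simpl.
  f_equal; ring.
Qed.

Lemma visc_symbol (P : params) (f : Fcoef) (a b : Z) :
  visc P f a b = Cscale (- mode_viscosity P a b) (f a b).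
Proof.
  unfold visc, Fadd, Fscale, pd1, pd2, mode_viscosity, Cadd, Cscale, Cmul; simpl.
  f_equal; ring.
Qed.

Lemma lap_symbol (f : Fcoef) (a b : Z) :
  lap f a b = Cscale (- (IZR a ^ 2 + IZR b ^ 2)) (f a b).
Proof. unfold lap, Fadd, pd1, pd2, Cadd, Cscale, Cmul; simpl. f_equal; ring. Qed.

Ltac solve_mode_symbol :=
  unfold Ssub, Sadd, Sscale, Bop, Lop, B11, B12, B21, B22;
  cbv beta iota delta [sr su1 su2 Fadd Fscale pd1 pd2 divg];
  rewrite ?Dadv_symbol, ?visc_symbol, ?lap_symbol;
  unfold mode_diag, mode_coupling, Cadd, Cscale, Cmul; cbn [re im]; f_equal; ring.

Lemma pd1_mode_symbol (P : params) (V : State) (a b : Z) :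
  pd1 (sr (Ssub (Bop P V) (Lop P V))) a b
  = Cadd (Cmul (mode_diag P a b) (pd1 (sr V) a b))
         (Cmul (Cscale (IZR a) (Cscale (p_rhob P) (mode_coupling P a b)))
               (divg (su1 V) (su2 V) a b)).
Proof. solve_mode_symbol. Qed.

Lemma pd2_mode_symbol (P : params) (V : State) (a b : Z) :
  pd2 (sr (Ssub (Bop P V) (Lop P V))) a b
  = Cadd (Cmul (mode_diag P a b) (pd2 (sr V) a b))
         (Cmul (Cscale (IZR b) (Cscale (p_rhob P) (mode_coupling P a b)))
               (divg (su1 V) (su2 V) a b)).
Proof. solve_mode_symbol. Qed.

Lemma divg_mode_symbol (P : params) (V : State) (a b : Z) :
  divg (su1 (Ssub (Bop P V) (Lop P V))) (su2 (Ssub (Bop P V) (Lop P V))) a b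
  = Cadd (Cmul (mode_diag P a b) (divg (su1 V) (su2 V) a b))
         (Cmul (Cscale (p_ab P ^ 2 / (p_rhob P * p_eps P ^ 2)) (mode_coupling P a b))
               (Cadd (Cscale (IZR a) (pd1 (sr V) a b)) (Cscale (IZR b) (pd2 (sr V) a b)))).
Proof. solve_mode_symbol. Qed.

Definition mode_rate (P : params) (a b : Z) : R :=
  2 * Rabs (re (mode_diag P a b))
  + (IZR a ^ 2 + IZR b ^ 2) * (Cnorm2 (Cscale (p_rhob P) (mode_coupling P a b)) + 2)
  + Cnorm2 (Cscale (p_ab P ^ 2 / (p_rhob P * p_eps P ^ 2)) (mode_coupling P a b)) + 2.

Lemma mode_pairing_symbol_le (P : params) (a b : Z) (V : State) :
  2 * mode_pairing a b V (Ssub (Bop P V) (Lop P V)) <= mode_rate P a b * mode_defect a b V.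
Proof.
  unfold mode_pairing, mode_defect, mode_rate.
  rewrite pd1_mode_symbol, pd2_mode_symbol, divg_mode_symbol.
  apply coupled_energy_le.
Qed.

Lemma Sadd_eq_Ssub (W L S : State) : Sadd W L = S -> W = Ssub S L.
Proof.
  intros <-. destruct W as [r u1 u2], L as [r' u1' u2'].
  unfold Ssub, Sadd, Sscale; simpl.
  f_equal; do 2 (apply functional_extensionality; intros ?);
    unfold Fadd, Fscale, Cadd, Cscale; simpl;
    match goal with |- ?f ?x ?y = _ => destruct (f x y) end; simpl; f_equal; ring.
Qed.

Section Propagation.

Variables (P : params) (U dU : R -> State).
Hypothesis HC1 : C1_H2 U dU.
Hypothesis Heq : forall t, 0 <= t -> Sadd (dU t) (Lop P (U t)) = Bop P (U t).

Lemma mode_defect_propagates (a b : Z) (t : R) :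
  0 < t -> mode_defect a b (U 0) = 0 -> mode_defect a b (U t) = 0.
Proof.
  intros Ht H0. rewrite <- (extend_nonneg U dU t) by lra.
  apply (gronwall_zero (fun s => mode_defect a b (extend U dU s))
           (fun s => 2 * mode_pairing a b (U s) (dU s)) (mode_rate P a b) t Ht).
  - intros s Hs. apply extend_mode_defect_deriv; [exact HC1 | lra].
  - intros s Hs. rewrite extend_nonneg by lra.
    rewrite (Sadd_eq_Ssub _ _ _ (Heq s ltac:(lra))).
    apply mode_pairing_symbol_le.
  - rewrite extend_nonneg by lra. exact H0.
  - intros s _. apply mode_defect_ge0.
Qed.

End Propagation.

Theorem mainTheorem7
  (eps dt dx1 dx2 rhob ab ub1 ub2 b1 b2 b3 : R)
  (Heps : 0 < eps) (Hdt : 0 < dt) (Hdx1 : 0 < dx1) (Hdx2 : 0 < dx2)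
  (Hrhob : 0 < rhob) (Hab : 0 < ab)
  (U dU : R -> State)
  (HC1 : C1_H2 U dU)
  (Heq : forall t, 0 <= t ->
     Sadd (dU t) (Lop (mkP eps dt dx1 dx2 rhob ab ub1 ub2 b1 b2 b3) (U t))
     = Bop (mkP eps dt dx1 dx2 rhob ab ub1 ub2 b1 b2 b3) (U t))
  (H0 : inE (U 0)) :
  forall t, 0 < t -> inE (U t).
Proof.
  intros t Ht. apply inE_mode_defect.
  - apply inH2S_inL2S. apply (proj1 HC1 t). lra.
  - intros a b. apply (mode_defect_propagates _ U dU HC1 Heq a b t Ht).
    apply mode_defect_inE. exact H0.
Qed.
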